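(* Let $\Sigma=(I,X,\mathcal U,\phi,Y,h)$ be a forward complete control system with outputs. Then the following are equivalent: (1) $\Sigma$ is ISS and $h$ is $\mathcal K$-bounded; (2) $\Sigma$ is IOS and IOSS.
   Context: Let $I\in\{\mathbb N_0,\mathbb R_0^+\}$. A forward complete control system with outputs $\Sigma=(I,X,\mathcal U,\phi,Y,h)$ consists of: a normed space $(X,\|\cdot\|_X)$; a vector space $U$ and a normed linear subspace $(\mathcal U,\|\cdot\|_{\mathcal U})$ of $\{u:I\to U\}$ such that for all $u\in\mathcal U,\tau\in I$, $u(\cdot+\tau)\in\mathcal U$ with $\|u(\cdot+\tau)\|_{\mathcal U}\le\|u\|_{\mathcal U}$, and for $t_2\ge t_1\ge 0$ the function $u|_{[t_1,t_2]}$ ($u$ on $[t_1,t_2]$, $0$ elsewhere) lies in $\mathcal U$ with $\|u|_{[t_1,t_2]}\|_{\mathcal U}\le\|u\|_{\mathcal U}$; a map $\phi:I\times X\times\mathcal U\to X$ with $\phi(0,x,u)=x$, causality (if $u,\tilde u$ agree on $[0,t]$ then $\phi(t,x,u)=\phi(t,x,\tilde u)$), and cocycle property $\phi(t+s,x,u)=\phi(s,\phi(t,x,u),u(t+\cdot))$; a normed space $Y$ and $h:X\times U\to Y$. Write $y(t,x,u)=h(\phi(t,x,u),u(t))$. $\mathcal K,\mathcal K_\infty,\mathcal{KL}$ are the standard comparison function classes. ISS: $\exists\beta\in\mathcal{KL},\gamma\in\mathcal K_\infty$ with $\|\phi(t,x,u)\|_X\le\beta(\|x\|_X,t)+\gamma(\|u\|_{\mathcal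 U})$ for all $x\in X,u\in\mathcal U,t\in I$. IOS: $\exists\beta\in\mathcal{KL},\gamma\in\mathcal K_\infty$ with $\|y(t,x,u)\|_Y\le\beta(\|x\|_X,t)+\gamma(\|u\|_{\mathcal U})$ for all $x,u,t$. IOSS: $\exists\beta\in\mathcal{KL},\gamma_1,\gamma_2\in\mathcal K$ with $\|\phi(t,x,u)\|_X\le\beta(\|x\|_X,t)+\gamma_1(\|u|_{[0,t]}\|_{\mathcal U})+\gamma_2(\sup_{s\in[0,t]}\|y(s,x,u)\|_Y)$ for all $x,u,t$. $h$ is $\mathcal K$-bounded: there exist $\sigma_1,\gamma_1\in\mathcal K$ with $\|h(x,u(0))\|_Y\le\sigma_1(\|x\|_X)+\gamma_1(\|u\|_{\mathcal U})$ for all $x\in X,u\in\mathcal U$. *)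

From HB Require Import structures.
From mathcomp Require Import all_boot all_order all_algebra.
From mathcomp Require Import all_classical all_reals all_analysis.
Set Implicit Arguments. Unset Strict Implicit. Unset Printing Implicit Defensive.
Import Order.TTheory GRing.Theory Num.Theory.
Import numFieldNormedType.Exports.
Local Open Scope classical_set_scope.
Local Open Scope ring_scope.

Section ControlSystems.
Variable R : realType.

Definition is_time (disc : bool) (t : R) : Prop :=
  0 <= t /\ (disc -> exists n : nat, t = n%:R).

Definition time (disc : bool) := {t : R | is_time disc t}.

Lemma is_time0 disc : is_time disc 0.
Proof. split=> // _; exists 0%N; by []. Qed.

Lemma is_timeD disc s t : is_time disc s -> is_time disc t -> is_time disc (s + t).
Proof.
move=> [s0 hs] [t0 ht]; split; first exact: addr_ge0.
move=> d; have [n ->] := hs d; have [m ->] := ht d; exists (n + m)%N.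
by rewrite natrD.
Qed.

Definition tzero (disc : bool) : time disc := exist _ 0 (is_time0 disc).
Definition tadd (disc : bool) (s t : time disc) : time disc :=
  exist _ (sval s + sval t) (is_timeD (svalP s) (svalP t)).

Definition tshift (disc : bool) (U : Type) (u : time disc -> U) (tau : time disc)
  : time disc -> U := fun s => u (tadd s tau).

Definition trestr (disc : bool) (U : lmodType R) (u : time disc -> U)
  (t1 t2 : time disc) : time disc -> U :=
  fun s => if (sval t1 <= sval s <= sval t2) then u s else 0.

Definition class_K (g : R -> R) : Prop :=
  g 0 = 0 /\ {within [set x | 0 <= x], continuous g} /\
  (forall x y, 0 <= x -> x < y -> g x < g y).

Definition class_Kinf (g : R -> R) : Prop :=
  class_K g /\ (forall M : R, exists r, 0 <= r /\ M < g r).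

Definition class_KL (b : R -> R -> R) : Prop :=
  (forall t, 0 <= t -> class_K (fun r => b r t)) /\
  (forall r, 0 <= r ->
     (forall s t, 0 <= s -> s <= t -> b r t <= b r s) /\
     b r t @[t --> +oo] --> 0).

Record ctrl_sys (disc : bool) (X : normedModType R) (U : lmodType R)
  (Y : normedModType R) := CtrlSys {
  Uset : set (time disc -> U);
  unorm : (time disc -> U) -> R;
  phi : time disc -> X -> (time disc -> U) -> X;
  hout : X -> U -> Y }.

Section Props.
Variables (disc : bool) (X : normedModType R) (U : lmodType R) (Y : normedModType R).
Variable S : ctrl_sys disc X U Y.

Local Notation I := (time disc).
Local Notation UU := (Uset S).
Local Notation nu := (unorm S).

Definition is_fc_ctrl_sys : Prop :=
  [/\ UU (fun _ => 0) /\
      (forall a u v, UU u -> UU v -> UU (fun t => a *: u t + v t)),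
      (forall u, UU u -> 0 <= nu u) /\ (forall u, UU u -> nu u = 0 -> u = (fun _ => 0)),
      (forall a u, UU u -> nu (fun t => a *: u t) = `|a| * nu u) /\
      (forall u v, UU u -> UU v -> nu (fun t => u t + v t) <= nu u + nu v),
      (forall u (tau : I), UU u -> UU (tshift u tau) /\ nu (tshift u tau) <= nu u) /\
      (forall u (t1 t2 : I), UU u -> sval t1 <= sval t2 ->
          UU (trestr u t1 t2) /\ nu (trestr u t1 t2) <= nu u) &
      [/\ (forall x u, UU u -> phi S (tzero disc) x u = x),
          (forall (t : I) x u v, UU u -> UU v ->
             (forall s : I, sval s <= sval t -> u s = v s) ->
             phi S t x u = phi S t x v) &
          (forall (t s : I) x u, UU u ->
             phi S (tadd t s) x u = phi S s (phi S t x u) (tshift u t))]].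

Definition yout (t : I) (x : X) (u : I -> U) : Y := hout S (phi S t x u) (u t).

Definition ISS : Prop :=
  exists beta gamma, class_KL beta /\ class_Kinf gamma /\
  forall x u (t : I), UU u -> `|phi S t x u| <= beta `|x| (sval t) + gamma (nu u).

Definition IOS : Prop :=
  exists beta gamma, class_KL beta /\ class_Kinf gamma /\
  forall x u (t : I), UU u -> `|yout t x u| <= beta `|x| (sval t) + gamma (nu u).

(* extension of g to \bar R at +oo (sup may be infinite) *)
Definition extK (g : R -> R) (e : \bar R) : \bar R :=
  if e is r%:E then (g r)%:E else +oo%E.

Definition IOSS : Prop :=
  exists beta gamma1 gamma2, class_KL beta /\ class_K gamma1 /\ class_K gamma2 /\
  forall x u (t : I), UU u ->
    ((`|phi S t x u|)%:E <=
      (beta `|x| (sval t) + gamma1 (nu (trestr u (tzero disc) t)))%:E +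
      extK gamma2 (ereal_sup [set (`|yout s x u|)%:E | s in [set s : I | (sval s <= sval t)%R]]))%E.

Definition K_bounded_output : Prop :=
  exists sigma1 gamma1, class_K sigma1 /\ class_K gamma1 /\
  forall x u, UU u -> `|hout S x (u (tzero disc))| <= sigma1 `|x| + gamma1 (nu u).

End Props.
End ControlSystems.

From HB Require Import structures.
From mathcomp Require Import all_boot all_order all_algebra.
From mathcomp Require Import all_classical all_reals all_analysis.
From mathcomp Require Import lra.
Set Implicit Arguments. Unset Strict Implicit. Unset Printing Implicit Defensive.
Import Order.TTheory GRing.Theory Num.Theory.
Import numFieldNormedType.Exports.
Local Open Scope classical_set_scope.
Local Open Scope ring_scope.

(* ISS bounds the state, hence through the K-bound on h the output, which gives IOS; it
   also gives IOSS since the output term there is nonnegative.  IOS evaluated at t = 0 is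
   the K-bound on h.  For the converse, IOS bounds the output uniformly in time, and IOSS
   turns this into a uniform state bound A(|x|) + B(|u|).  Splitting t = t1 + t2 with both
   parts about t/2, the cocycle property restarts IOSS at phi(t1): the term
   beta(|phi(t1)|, t2) decays in t2, while the output on [t1, t] is bounded by
   beta_y(|x|, t1) + gamma_y(|u|), which decays in t1. *)

Lemma cvg_within_nbhs {T : Type} {U : topologicalType} (F : set_system T)
    {FF : Filter F} (A : set U) (g : T -> U) (y : U) :
  g @ F --> y -> (\forall t \near F, A (g t)) -> g @ F --> within A (nbhs y).
Proof.
move=> gy FA P yP.
by apply: filterS2 FA (gy _ yP) => t At /(_ At).
Qed.

Lemma within_continuous_comp {T U V : topologicalType} (A : set T) (B : set U)
    (f : U -> V) (g : T -> U) :
  (forall x, A x -> B (g x)) ->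
  {within A, continuous g} -> {within B, continuous f} ->
  {within A, continuous (f \o g)}.
Proof.
move=> gAB /subspace_continuousP gc /subspace_continuousP fc.
apply/subspace_continuousP => x Ax; apply: cvg_comp (fc _ (gAB _ Ax)).
apply: cvg_within_nbhs (gc _ Ax) _.
by apply: filterS (near_withinT _ _) => y /gAB.
Qed.

Section ComparisonFunctions.
Variable R : realType.
Implicit Types (f g : R -> R) (b : R -> R -> R).

Local Notation nonneg := [set x : R | 0 <= x].

Lemma classK_le g x y : class_K g -> 0 <= x -> x <= y -> g x <= g y.
Proof.
move=> [_ [_ gi]] x0; rewrite le_eqVlt => /predU1P[-> //|xy].
exact/ltW/gi.
Qed.

Lemma classK_ge0 g x : class_K g -> 0 <= x -> 0 <= g x.
Proof. by move=> Kg x0; case: (Kg) => <- _; exact: classK_le. Qed.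

Lemma classKD f g : class_K f -> class_K g -> class_K (fun r => f r + g r).
Proof.
move=> [f0 [fc fi]] [g0 [gc gi]]; split; first by rewrite f0 g0 addr0.
split; first exact: (within_continuousD fc gc).
by move=> x y x0 xy; apply: ltrD; [exact: fi|exact: gi].
Qed.

Lemma classK_comp f g : class_K f -> class_K g -> class_K (f \o g).
Proof.
move=> Kf Kg; have g_ge0 x := @classK_ge0 g x Kg.
move: Kf Kg => [f0 [fc fi]] [g0 [gc gi]]; split; first by rewrite /= g0 f0.
split; first exact: (within_continuous_comp (A := nonneg) (B := nonneg) g_ge0 gc fc).
by move=> x y x0 xy; apply: fi; [exact: g_ge0|exact: gi].
Qed.

Lemma classK_id : class_K (@id R).
Proof. by split=> //; split=> //; apply: continuous_subspaceT => x; exact: cvg_id. Qed.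

Lemma classK_scale (c : R) : 0 < c -> class_K ( *%R c).
Proof.
move=> c0; split; first exact: mulr0.
split; first exact/continuous_subspaceT/mulrl_continuous.
by move=> x y _ xy; rewrite ltr_pM2l.
Qed.

(* The usual substitute for subadditivity, which class-K functions lack. *)
Lemma classK_le_double g a c : class_K g -> 0 <= a -> 0 <= c ->
  g (a + c) <= g (2 * a) + g (2 * c).
Proof.
move=> Kg a0 c0; have ga := classK_ge0 Kg (mulr_ge0 (ler0n _ 2) a0).
have gc := classK_ge0 Kg (mulr_ge0 (ler0n _ 2) c0).
have [ac|ca] := leP a c.
- apply: le_trans (classK_le Kg (addr_ge0 a0 c0) (_ : a + c <= 2 * c)) _; first lra.
  by rewrite lerDr.
- apply: le_trans (classK_le Kg (addr_ge0 a0 c0) (_ : a + c <= 2 * a)) _; first lra.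
  by rewrite lerDl.
Qed.

Lemma classKinf_add_id g : class_K g -> class_Kinf (fun r => g r + r).
Proof.
move=> Kg; split; first exact: classKD Kg classK_id.
move=> M; exists (Num.max M 0 + 1).
have M0 : M <= Num.max M 0 by rewrite le_max lexx.
have r0 : 0 <= Num.max M 0 + 1 by rewrite addr_ge0 // le_max lexx orbT.
by split=> //; have := classK_ge0 Kg r0; lra.
Qed.

Lemma classKL_K b t : class_KL b -> 0 <= t -> class_K (b^~ t).
Proof. by move=> [Kb _] /Kb. Qed.

Lemma classKL_ge0 b r t : class_KL b -> 0 <= r -> 0 <= t -> 0 <= b r t.
Proof. by move=> Kb r0 t0; exact: classK_ge0 (classKL_K Kb t0) r0. Qed.

Lemma classKL_le b r r' t : class_KL b -> 0 <= t -> 0 <= r -> r <= r' ->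
  b r t <= b r' t.
Proof. by move=> Kb t0; exact: classK_le (classKL_K Kb t0). Qed.

Lemma classKL_nonincr b r s t : class_KL b -> 0 <= r -> 0 <= s -> s <= t ->
  b r t <= b r s.
Proof. by move=> [_ Kb] /Kb[dec _]; exact: dec. Qed.

Lemma classKL_cvg0 b r : class_KL b -> 0 <= r -> b r t @[t --> +oo] --> 0.
Proof. by move=> [_ Kb] /Kb[]. Qed.

Lemma classKL_comp f b : class_K f -> class_KL b -> class_KL (fun r t => f (b r t)).
Proof.
move=> Kf Kb; split=> [t t0|r r0]; first exact: classK_comp Kf (classKL_K Kb t0).
split=> [s t s0 st|].
  apply: classK_le Kf _ (classKL_nonincr Kb r0 s0 st).
  exact: classKL_ge0 Kb r0 (le_trans s0 st).
have [f0 [/subspace_continuousP fc _]] := Kf; rewrite -f0.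
apply: cvg_comp (fc 0 (lexx 0)); apply: cvg_within_nbhs (classKL_cvg0 Kb r0) _.
near=> t; apply: classKL_ge0 Kb r0 _.
by near: t; exact: nbhs_pinfty_ge.
Unshelve. all: by end_near.
Qed.

Lemma classKL_compr b a : class_KL b -> class_K a -> class_KL (fun r t => b (a r) t).
Proof.
move=> Kb Ka; split=> [t t0|r r0]; first exact: classK_comp (classKL_K Kb t0) Ka.
by case: Kb => _ /(_ _ (classK_ge0 Ka r0)).
Qed.

Lemma classKLD b c : class_KL b -> class_KL c -> class_KL (fun r t => b r t + c r t).
Proof.
move=> Kb Kc; split=> [t t0|r r0].
  exact: classKD (classKL_K Kb t0) (classKL_K Kc t0).
split=> [s t s0 st|]; first by apply: lerD; exact: classKL_nonincr.
by rewrite -[0]addr0; apply: cvgD; exact: classKL_cvg0.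
Qed.

Lemma classKL_reparam b (p : R -> R) : class_KL b ->
  (forall t, 0 <= p t) -> {homo p : s t / s <= t} -> p t @[t --> +oo] --> +oo ->
  class_KL (fun r t => b r (p t)).
Proof.
move=> Kb p0 pmon pcvg; split=> [t _|r r0]; first exact: classKL_K Kb (p0 t).
split=> [s t _ st|]; first by apply: classKL_nonincr => //; exact: pmon.
exact: cvg_comp pcvg (classKL_cvg0 Kb r0).
Qed.

End ComparisonFunctions.

Section Time.
Variable R : realType.

Definition lower_half (t : R) := Num.max 0 ((t - 1) / 2).

Lemma lower_half_ge0 t : 0 <= lower_half t.
Proof. by rewrite le_max lexx. Qed.

Lemma lower_half_homo : {homo lower_half : s t / s <= t}.
Proof.
move=> s t st; rewrite ge_max lower_half_ge0 le_max /=; apply/orP; right.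
by rewrite ler_pM2r ?invr_gt0 // lerD2r.
Qed.

Lemma lower_half_cvgy : lower_half t @[t --> +oo] --> +oo.
Proof.
apply/cvgryPge => A; near=> t; rewrite le_max; apply/orP; right.
rewrite ler_pdivlMr //; suff : 2 * A + 1 <= t by lra.
by near: t; apply: nbhs_pinfty_ge; exact: num_real.
Unshelve. all: by end_near.
Qed.

Variable disc : bool.
Implicit Types t : time R disc.

Lemma time_ge0 t : 0 <= sval t.
Proof. exact: (svalP t).1. Qed.

Lemma sval_time_inj : injective (@sval R (is_time disc)).
Proof. by move=> [a Ha] [b Hb] /= ab; subst b; congr exist; exact: Prop_irrelevance. Qed.

Lemma tshift_tzero (U : Type) (u : time R disc -> U) t : tshift u t (tzero R disc) = u t.
Proof. by congr u; apply: sval_time_inj; rewrite /= add0r. Qed.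

(* In discrete time the halves are [n./2] and [n - n./2], whence the [- 1] in [lower_half]. *)
Lemma time_split_halves t : exists t1 t2,
  tadd t1 t2 = t /\ lower_half (sval t) <= sval t1 /\ lower_half (sval t) <= sval t2.
Proof.
case: t => t [t0 tdisc]; rewrite /lower_half.
suff [t1 [t2 [t1t2 [ht1 ht2]]]] : exists t1 t2 : time R disc,
    sval t1 + sval t2 = t /\ (t - 1) / 2 <= sval t1 /\ (t - 1) / 2 <= sval t2.
  exists t1, t2; split; first exact: sval_time_inj.
  by rewrite !ge_max !time_ge0.
case: disc tdisc => tdisc.
- have [n ->] := tdisc erefl.
  have Ht k : is_time true (k%:R : R) by split => // _; exists k.
  exists (exist _ _ (Ht n./2)), (exist _ _ (Ht (n - n./2)%N)) => /=.
  have hn : (n./2 <= n)%N by rewrite -[leqRHS]odd_double_half -addnn addnA leq_addl.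
  have En : (n%:R : R) = (odd n)%:R + n./2%:R + n./2%:R.
    by rewrite -!natrD -addnA addnn -[LHS](congr1 _ (odd_double_half n)).
  have odd01 : 0 <= ((odd n)%:R : R) <= 1 by case: (odd n); rewrite ?lexx ?ler01.
  move/andP: odd01 => [odd0 odd1].
  by rewrite natrB // addrC subrK; split=> //; rewrite !ler_pdivrMr //; split; lra.
- have Ht : is_time false (t / 2) by split => //; rewrite divr_ge0.
  exists (exist _ _ Ht), (exist _ _ Ht) => /=.
  have half_le : (t - 1) / 2 <= t / 2 by rewrite ler_pM2r ?invr_gt0 // gerBl.
  by rewrite -splitr.
Qed.

End Time.

Section ExtendedComparison.
Variable R : realType.
Local Open Scope ereal_scope.

Lemma extK_ge0 (g : R -> R) e : class_K g -> 0 <= e -> 0 <= extK g e.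
Proof. by move=> Kg; case: e => [r| |] //=; rewrite !lee_fin; exact: classK_ge0. Qed.

Lemma extK_sup_le (g : R -> R) (T : Type) (P : set T) (f : T -> R) (M : R) s0 :
  class_K g -> P s0 -> (forall s, P s -> (0 <= f s <= M)%R) ->
  extK g (ereal_sup [set (f s)%:E | s in P]) <= (g M)%:E.
Proof.
move=> Kg Ps0 fM; have /andP[fs0 _] := fM _ Ps0.
have supM : ereal_sup [set (f s)%:E | s in P] <= M%:E.
  by apply: ub_ereal_sup => _ [s Ps <-]; rewrite lee_fin; case/andP: (fM s Ps).
have sup0 : (f s0)%:E <= ereal_sup [set (f s)%:E | s in P].
  by apply: ereal_sup_ubound; exists s0.
move: supM sup0; case: ereal_sup => [r| |] //=; rewrite !lee_fin => rM fr.
by apply: classK_le Kg _ rM; exact: le_trans fs0 fr.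
Qed.

End ExtendedComparison.

Section ControlSystem.
Variables (R : realType) (disc : bool) (X : normedModType R) (U : lmodType R)
  (Y : normedModType R) (S : ctrl_sys disc X U Y).
Hypothesis fcS : is_fc_ctrl_sys S.

Local Notation I := (time R disc).
Local Notation UU := (Uset S).
Local Notation nu := (unorm S).
Local Notation t0 := (tzero R disc).
Implicit Types (t s : I) (x : X) (u : I -> U).

Lemma unorm_ge0 u : UU u -> 0 <= nu u.
Proof. by case: fcS => _ [+ _] _ _ _; apply. Qed.

Lemma Uset_tshift u t : UU u -> UU (tshift u t).
Proof. by case: fcS => _ _ _ [+ _] _ => /[apply] /(_ t) []. Qed.

Lemma unorm_tshift u t : UU u -> nu (tshift u t) <= nu u.
Proof. by case: fcS => _ _ _ [+ _] _ => /[apply] /(_ t) []. Qed.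

Lemma Uset_trestr u t : UU u -> UU (trestr u t0 t).
Proof. by case: fcS => _ _ _ [_ +] _ => /(_ u t0 t) /[apply] /(_ (time_ge0 t)) []. Qed.

Lemma unorm_trestr u t : UU u -> nu (trestr u t0 t) <= nu u.
Proof. by case: fcS => _ _ _ [_ +] _ => /(_ u t0 t) /[apply] /(_ (time_ge0 t)) []. Qed.

Lemma phi_tzero x u : UU u -> phi S t0 x u = x.
Proof. by case: fcS => _ _ _ _ [+ _ _]; apply. Qed.

Lemma phi_trestr t x u : UU u -> phi S t x (trestr u t0 t) = phi S t x u.
Proof.
move=> Uu; case: fcS => _ _ _ _ [_ causal _].
apply: causal (Uset_trestr t Uu) Uu _ => s st.
by rewrite /trestr /= time_ge0 st.
Qed.

Lemma phi_tadd t s x u : UU u ->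
  phi S (tadd t s) x u = phi S s (phi S t x u) (tshift u t).
Proof. by case: fcS => _ _ _ _ [_ _ +]; apply. Qed.

Lemma yout_tshift t s x u : UU u ->
  yout S s (phi S t x u) (tshift u t) = yout S (tadd t s) x u.
Proof.
move=> Uu; rewrite /yout -phi_tadd //; congr (hout S _ (u _)).
by apply: sval_time_inj; rewrite /= addrC.
Qed.

Lemma ISS_IOSS : ISS S -> IOSS S.
Proof.
move=> [b [g [Kb [[Kg _] iss]]]]; exists b, g, g; split=> //; split=> //; split=> //.
move=> x u t Uu; rewrite -phi_trestr //.
rewrite -[X in (X <= _)%E]adde0; apply: leeD.
  by rewrite lee_fin; apply: iss; exact: Uset_trestr.
apply: (extK_ge0 Kg); apply: le_trans (_ : (`|yout S t x u|)%:E <= _)%E.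
  by rewrite lee_fin.
by apply: ereal_sup_ubound; exists t => /=.
Qed.

Lemma ISS_Kbounded_IOS : ISS S -> K_bounded_output S -> IOS S.
Proof.
move=> [b [g [Kb [[Kg _] iss]]]] [s1 [g1 [Ks1 [Kg1 hb]]]].
exists (fun r (t : R) => s1 (2 * b r t)), (fun q => s1 (2 * g q) + g1 q + q).
split; first exact: classKL_comp (classK_comp Ks1 (classK_scale _)) Kb.
split.
  exact: classKinf_add_id (classKD (classK_comp Ks1 (classK_comp (classK_scale _) Kg)) Kg1).
move=> x u t Uu; have Uv := Uset_tshift t Uu.
have := hb (phi S t x u) _ Uv; rewrite tshift_tzero => /le_trans; apply.
have b0 := classKL_ge0 Kb (normr_ge0 x) (time_ge0 t).
have g0 := classK_ge0 Kg (unorm_ge0 Uu).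
have s1_le : s1 `|phi S t x u| <= s1 (2 * b `|x| (sval t)) + s1 (2 * g (nu u)).
  exact: le_trans (classK_le Ks1 (normr_ge0 _) (iss x u t Uu)) (classK_le_double Ks1 b0 g0).
have g1_le : g1 (nu (tshift u t)) <= g1 (nu u).
  exact: classK_le Kg1 (unorm_ge0 Uv) (unorm_tshift t Uu).
by have := unorm_ge0 Uu; lra.
Qed.

Lemma IOS_Kbounded : IOS S -> K_bounded_output S.
Proof.
move=> [b [g [Kb [[Kg _] ios]]]]; exists (b^~ 0), g.
split; first exact: classKL_K Kb (lexx 0).
by split=> // x u Uu; have := ios x u t0 Uu; rewrite /yout phi_tzero.
Qed.

Section IOS_IOSS.
Variables (bo : R -> R -> R) (gy : R -> R).
Hypotheses (Kbo : class_KL bo) (Kgy : class_K gy).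
Hypothesis ios : forall x u t, UU u -> `|yout S t x u| <= bo `|x| (sval t) + gy (nu u).

Variables (b : R -> R -> R) (g1 g2 : R -> R).
Hypotheses (Kb : class_KL b) (Kg1 : class_K g1) (Kg2 : class_K g2).
Hypothesis ioss : forall x u t, UU u ->
  ((`|phi S t x u|)%:E <=
    (b `|x| (sval t) + g1 (nu (trestr u t0 t)))%:E +
    extK g2 (ereal_sup [set (`|yout S s x u|)%:E | s in [set s : I | (sval s <= sval t)%R]]))%E.

Lemma IOSS_le x u t M : UU u ->
  (forall s, sval s <= sval t -> `|yout S s x u| <= M) ->
  `|phi S t x u| <= b `|x| (sval t) + g1 (nu u) + g2 M.
Proof.
move=> Uu yM; rewrite -lee_fin EFinD; apply: le_trans (ioss x t Uu) _.
apply: leeD.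
  rewrite lee_fin lerD2l.
  exact: classK_le Kg1 (unorm_ge0 (Uset_trestr t Uu)) (unorm_trestr t Uu).
apply: (extK_sup_le (f := fun s => `|yout S s x u|) Kg2 (lexx (sval t))) => s st.
by rewrite normr_ge0 yM.
Qed.

Let A r := b r 0 + g2 (2 * bo r 0).
Let B q := g1 q + g2 (2 * gy q).

Let K2 : class_K ( *%R 2 : R -> R).
Proof. exact: classK_scale. Qed.

Let KA : class_K A.
Proof.
exact: classKD (classKL_K Kb (lexx 0)) (classK_comp (classK_comp Kg2 K2) (classKL_K Kbo (lexx 0))).
Qed.

Let KB : class_K B.
Proof. exact: classKD Kg1 (classK_comp (classK_comp Kg2 K2) Kgy). Qed.

Lemma phi_le_AB x u t : UU u -> `|phi S t x u| <= A `|x| + B (nu u).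
Proof.
move=> Uu; have r0 := normr_ge0 x; have q0 := unorm_ge0 Uu.
have y_le s : `|yout S s x u| <= bo `|x| 0 + gy (nu u).
  apply: le_trans (ios x s Uu) _; rewrite lerD2r.
  exact: classKL_nonincr Kbo r0 (lexx 0) (time_ge0 s).
apply: le_trans (IOSS_le Uu (fun s _ => y_le s)) _.
have b_le := classKL_nonincr Kb r0 (lexx 0) (time_ge0 t).
have g2_le := classK_le_double Kg2 (classKL_ge0 Kbo r0 (lexx 0)) (classK_ge0 Kgy q0).
rewrite /A /B; lra.
Qed.

Lemma phi_tadd_le x u t1 t2 : UU u ->
  `|phi S (tadd t1 t2) x u| <= b (2 * A `|x|) (sval t2) + b (2 * B (nu u)) 0
                                + B (nu u) + g2 (2 * bo `|x| (sval t1)).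
Proof.
move=> Uu; have r0 := normr_ge0 x; have q0 := unorm_ge0 Uu.
have Uv := Uset_tshift t1 Uu.
have y_le s : `|yout S s (phi S t1 x u) (tshift u t1)| <= bo `|x| (sval t1) + gy (nu u).
  rewrite yout_tshift //; apply: le_trans (ios x (tadd t1 s) Uu) _; rewrite lerD2r.
  by apply: classKL_nonincr Kbo r0 (time_ge0 _) _; rewrite /= lerDl time_ge0.
rewrite phi_tadd //; apply: le_trans (IOSS_le Uv (fun s _ => y_le s)) _.
have A0 := classK_ge0 KA r0; have B0 := classK_ge0 KB q0.
have b_le : b `|phi S t1 x u| (sval t2) <= b (2 * A `|x|) (sval t2) + b (2 * B (nu u)) 0.
  have Kbt2 := classKL_K Kb (time_ge0 t2).
  apply: le_trans (classK_le Kbt2 (normr_ge0 _) (phi_le_AB x t1 Uu)) _.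
  apply: le_trans (classK_le_double Kbt2 A0 B0) _.
  by rewrite lerD2l; apply: classKL_nonincr Kb _ (lexx 0) (time_ge0 t2); rewrite mulr_ge0.
have g1_le : g1 (nu (tshift u t1)) <= g1 (nu u).
  exact: classK_le Kg1 (unorm_ge0 Uv) (unorm_tshift t1 Uu).
have g2_le := classK_le_double Kg2 (classKL_ge0 Kbo r0 (time_ge0 t1)) (classK_ge0 Kgy q0).
rewrite /B in B0 *; lra.
Qed.

Lemma IOS_IOSS_bounds_ISS : ISS S.
Proof.
exists (fun r (t : R) => b (2 * A r) (lower_half t) + g2 (2 * bo r (lower_half t))).
exists (fun q => b (2 * B q) 0 + B q + q).
split.
  have KLb := classKLD (classKL_compr Kb (classK_comp K2 KA))
                       (classKL_comp (classK_comp Kg2 K2) Kbo).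
  exact: classKL_reparam KLb (@lower_half_ge0 R) (@lower_half_homo R) (@lower_half_cvgy R).
split.
  exact: classKinf_add_id (classKD (classK_comp (classKL_K Kb (lexx 0)) (classK_comp K2 KB)) KB).
move=> x u t Uu; have [t1 [t2 [<- [ht1 ht2]]]] := time_split_halves t.
apply: le_trans (phi_tadd_le x t1 t2 Uu) _.
have r0 := normr_ge0 x.
have A0 : 0 <= 2 * A `|x| by rewrite mulr_ge0 ?(classK_ge0 KA).
have b_le := classKL_nonincr Kb A0 (lower_half_ge0 _) ht2.
have g2_le : g2 (2 * bo `|x| (sval t1)) <= g2 (2 * bo `|x| (lower_half (sval (tadd t1 t2)))).
  apply: classK_le Kg2 _ _; first by rewrite mulr_ge0 ?(classKL_ge0 Kbo) ?time_ge0.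
  by rewrite ler_pM2l //; exact: classKL_nonincr Kbo r0 (lower_half_ge0 _) ht1.
by have := unorm_ge0 Uu; lra.
Qed.

End IOS_IOSS.

Lemma IOS_IOSS_ISS : IOS S -> IOSS S -> ISS S.
Proof.
move=> [bo [gy [Kbo [[Kgy _] ios]]]] [b [g1 [g2 [Kb [Kg1 [Kg2 ioss]]]]]].
exact (IOS_IOSS_bounds_ISS Kbo Kgy ios Kb Kg1 Kg2 ioss).
Qed.

End ControlSystem.

Theorem proposition6 (R : realType) (disc : bool) (X : normedModType R)
  (U : lmodType R) (Y : normedModType R) (S : ctrl_sys disc X U Y) :
  is_fc_ctrl_sys S ->
  ((ISS S /\ K_bounded_output S) <-> (IOS S /\ IOSS S)).
Proof.
move=> fcS; split=> [[iss kb]|[ios ioss]].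
- by split; [exact: ISS_Kbounded_IOS | exact: ISS_IOSS].
- by split; [exact: IOS_IOSS_ISS | exact: IOS_Kbounded].
Qed.
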